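(* For any unit-weight graph $G$, there is a persuasive binary signaling scheme with cost exactly $\mathsf{OPT}^{\mathsf{stable}}$.
   Context: Setting. $V$ is a finite set of $n$ task types and $W$ is a symmetric matrix with entries in $\{0,1\}$ and $W_{v,v}=1$ (the unit-weight graph $G$ has edges $\{u,v\}$, $u\ne v$, with $W_{u,v}=1$). A vector $\theta\in\mathbb{R}_{\ge0}^V$ is feasible if $W\theta\ge\mathbf 1$ coordinatewise, and stable if it is feasible and for every $v$, $\theta_v=\min\{x\ge0: x+\sum_{v'\neq v}W_{v,v'}\theta_{v'}\ge1\}$. $\mathsf{OPT}^{\mathsf{stable}}=\min\{\|\theta\|_1:\theta\text{ stable}\}$. Signaling. There are $n$ agents; the type profile $t=(t_1,\dots,t_n)$ is a uniformly random bijection $[n]\to V$. A signaling scheme with finite signal space $\Sigma\subset[0,1]$ is a map $\varphi$ assigning to each bijection $t$ a distribution $\varphi(t)$ on $\Sigma^V$; given $t$, $s\sim\varphi(t)$ is drawn and agent $i$ privately receives $s_{t_i}$. For agent $i$, a signal $\theta\in\Sigma$ with $\Pr[s_{t_i}=\theta]>0$ and $x\ge0$, let $Q_i(x\mid\theta)=\mathbb{E}\big[x+\sum_{v'\neq t_i}W_{t_i,v'}s_{v'}\,\big|\,s_{t_i}=\theta\big]$. The scheme is persuasive if for every agent $i$ and every such $\theta$: $Q_i(\theta\mid\theta)\ge1$ and $\theta=\min\{x\ge0:Q_i(x\mid\theta)\ge1\}$. Its cost is $\mathbb{E}[\|s\|_1]$. Binary means $|\Sigma|=2$. *)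

From HB Require Import structures.
From mathcomp Require Import all_boot all_order all_algebra.
From mathcomp Require Import reals.
Set Implicit Arguments. Unset Strict Implicit. Unset Printing Implicit Defensive.
Import Order.TTheory GRing.Theory Num.Theory.
Local Open Scope ring_scope.

Definition is_least (R : realType) (P : R -> Prop) (m : R) : Prop :=
  P m /\ forall x, P x -> m <= x.

Definition unit_weight (R : realType) (V : finType) (W : V -> V -> R) : Prop :=
  (forall u v, W u v = 0 \/ W u v = 1) /\
  (forall u v, W u v = W v u) /\
  (forall v, W v v = 1).

Definition feasible (R : realType) (V : finType) (W : V -> V -> R) (th : V -> R) : Prop :=
  (forall v, 0 <= th v) /\ (forall v, 1 <= \sum_(v' : V) W v v' * th v').

Definition stable (R : realType) (V : finType) (W : V -> V -> R) (th : V -> R) : Prop :=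
  feasible W th /\
  forall v, is_least (fun x => 0 <= x /\ 1 <= x + \sum_(v' : V | v' != v) W v v' * th v') (th v).

Definition l1norm (R : realType) (V : finType) (th : V -> R) : R := \sum_(v : V) `|th v|.

Definition is_OPT_stable (R : realType) (V : finType) (W : V -> V -> R) (c : R) : Prop :=
  is_least (fun y => exists th, stable W th /\ l1norm th = y) c.

(* type profiles: maps agents 'I_n -> V, n = |V|; only bijections have positive mass *)
Definition profile (V : finType) := {ffun 'I_#|V| -> V}.

Definition prior (R : realType) (V : finType) (t : profile V) : R :=
  if injectiveb t then (#|[set t' : profile V | injectiveb t']|%:R)^-1 else 0.

(* A signaling scheme: finite signal index type S, signal values sigma : S -> [0,1]
   (injective, so Sigma = image of sigma has |S| elements), and for every profile t
   a distribution phi t on Sigma^V (represented as {ffun V -> S}). *)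
Definition is_scheme (R : realType) (V S : finType) (sigma : S -> R)
    (phi : profile V -> {ffun {ffun V -> S} -> R}) : Prop :=
  injective sigma /\ (forall a, 0 <= sigma a <= 1) /\
  forall t : profile V, injectiveb t ->
    (forall s, 0 <= phi t s) /\ \sum_(s : {ffun V -> S}) phi t s = 1.

Definition joint (R : realType) (V S : finType)
    (phi : profile V -> {ffun {ffun V -> S} -> R}) (t : profile V) (s : {ffun V -> S}) : R :=
  prior R t * phi t s.

Definition PrSig (R : realType) (V S : finType)
    (phi : profile V -> {ffun {ffun V -> S} -> R}) (i : 'I_#|V|) (a : S) : R :=
  \sum_(t : profile V) \sum_(s : {ffun V -> S}) joint phi t s * (s (t i) == a)%:R.

Definition Qexp (R : realType) (V S : finType) (W : V -> V -> R) (sigma : S -> R)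
    (phi : profile V -> {ffun {ffun V -> S} -> R}) (i : 'I_#|V|) (x : R) (a : S) : R :=
  (\sum_(t : profile V) \sum_(s : {ffun V -> S})
      joint phi t s * (s (t i) == a)%:R *
      (x + \sum_(v' : V | v' != t i) W (t i) v' * sigma (s v'))) / PrSig phi i a.

Definition persuasive (R : realType) (V S : finType) (W : V -> V -> R) (sigma : S -> R)
    (phi : profile V -> {ffun {ffun V -> S} -> R}) : Prop :=
  forall (i : 'I_#|V|) (a : S), 0 < PrSig phi i a ->
    1 <= Qexp W sigma phi i (sigma a) a /\
    is_least (fun x => 0 <= x /\ 1 <= Qexp W sigma phi i x a) (sigma a).

Definition cost (R : realType) (V S : finType) (sigma : S -> R)
    (phi : profile V -> {ffun {ffun V -> S} -> R}) : R :=
  \sum_(t : profile V) \sum_(s : {ffun V -> S}) joint phi t s * l1norm (fun v => sigma (s v)).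

(* A stable vector [th] of least l1 norm exists because the stable vectors form
   a compact set (they are the fixed points of th_v = max(0, 1 - sum_(w <> v)
   W_vw th_w) inside [0,1]^V).  Choose an independent set D inside the support
   of [th] such that every vertex of the support has a neighbour in D of at
   least its degree, and move the mass of every vertex onto such a neighbour.
   The result [q] lives on D, has total mass ||th||_1, satisfies q <= 1
   because (W th)_u = 1 on the support, and sum_u q_u deg u >= n because
   sum_u th_u deg u = sum_v (W th)_v >= n.
   The scheme draws independent signals s_u ~ Bernoulli(q_u) in {0,1},
   ignoring the type profile.  As the support of [q] is independent, an agent
   told 1 has no neighbour told 1, so 1 is its least best response.  For an
   agent told 0 the type is uniform, so its expected neighbour load is the
   ratio of E[sum_v [s_v = 0] (load of v)] to E[sum_v [s_v = 0]]; their
   difference is E[sum_u s_u deg u] - n >= 0, so 0 is its least best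
   response.  The expected cost is sum_u q_u = ||th||_1. *)

From HB Require Import structures.
From mathcomp Require Import all_boot all_order all_algebra perm.
From mathcomp Require Import reals zify.

Set Implicit Arguments. Unset Strict Implicit. Unset Printing Implicit Defensive.
Import Order.TTheory GRing.Theory Num.Theory.

Section IndependentDomination.
Variables (V : finType) (adj : rel V) (d : V -> nat).
Hypotheses (adjC : symmetric adj) (adj_refl : reflexive adj).

Definition independent (D : {set V}) :=
  [forall u in D, forall w in D, (u != w) ==> ~~ adj u w].

Lemma independentP (D : {set V}) :
  reflect {in D &, forall u w, u != w -> ~~ adj u w} (independent D).
Proof.
apply: (iffP forall_inP) => [D_ind u w uD wD | D_ind u uD].
  by move/forall_inP: (D_ind u uD) => /(_ w wD)/implyP.
by apply/forall_inP => w wD; apply/implyP; exact: D_ind.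
Qed.

(* Maximise the potential sum_(u in D) M ^ d u with M > #|V|: a vertex of P
   without a heavier neighbour in D could then replace all its (lighter)
   neighbours in D. *)
Lemma exists_independent_dominating_heavier (P : {set V}) :
  exists2 D : {set V}, (D \subset P) && independent D &
    forall v, v \in P -> exists2 u, u \in D & adj v u && (d v <= d u).
Proof.
pose M := #|V|.+1; pose potential (D : {set V}) := \sum_(u in D) M ^ d u.
pose admissible (D : {set V}) := (D \subset P) && independent D.
have adm0 : admissible set0.
  by rewrite /admissible sub0set; apply/independentP => u; rewrite inE.
case: (arg_maxnP potential adm0) => D /andP[DP /independentP D_ind] D_max.
exists D => [|v vP]; first by rewrite DP; exact/independentP.
have [/exists_inP//|/exists_inP no_heavier] :=
  boolP [exists u in D, adj v u && (d v <= d u)].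
exfalso.
pose N := [set u | adj v u]; pose D' := v |: (D :\: N).
have vDN : v \notin D :\: N by rewrite !inE adj_refl.
have D'_adm : admissible D'.
  apply/andP; split.
    by apply/subsetP => x /setU1P[->//|/setDP[/(subsetP DP)]].
  apply/independentP => x y /setU1P[->|/setDP[xD xN]] /setU1P[->|/setDP[yD yN]].
  - by rewrite eqxx.
  - by rewrite inE in yN.
  - by rewrite inE adjC in xN.
  - exact: D_ind.
have := D_max D' D'_adm; rewrite /potential big_setU1 //= [X in _ <= X](big_setID N) /=.
suff : \sum_(u in D :&: N) M ^ d u < M ^ d v by lia.
have lighter u : u \in D :&: N -> M * M ^ d u <= M ^ d v.
  rewrite !inE => /andP[uD avu]; rewrite -expnS leq_pexp2l // ltnNge.
  by apply/negP => duv; apply: no_heavier; exists u => //; rewrite avu.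
rewrite -(ltn_pmul2l (ltn0Sn #|V|)) -/M big_distrr /=.
apply: leq_ltn_trans (leq_sum _ lighter) _.
rewrite sum_nat_const ltn_pmul2r ?expn_gt0 //.
by rewrite ltnS max_card.
Qed.

End IndependentDomination.

Local Open Scope ring_scope.

Lemma is_least_shift (R : realType) (f : R -> R) (c m : R) :
  (forall x, f x = x + c) ->
  is_least (fun x => 0 <= x /\ 1 <= f x) m <-> m = Num.max 0 (1 - c).
Proof.
move=> fE; split => [[[m_ge0 m_ok] m_least]|->].
  rewrite fE -lerBlDr in m_ok.
  apply/eqP; rewrite eq_le ge_max m_ge0 m_ok andbT.
  have [c_ge1|c_lt1] := lerP 1 c.
    by rewrite le_max m_least // fE add0r.
  by rewrite le_max orbC m_least // fE ?subrK // subr_ge0 ltW.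
split; [split|].
- by rewrite le_max lexx.
- by rewrite fE -lerBlDr le_max lexx orbT.
- by move=> x [x_ge0 x_ok]; rewrite ge_max x_ge0 lerBlDr -fE.
Qed.

Section UnitWeight.
Variables (R : realType) (V : finType) (W : V -> V -> R).
Hypothesis UW : unit_weight W.

Definition adjW : rel V := fun u w => W u w == 1.
Definition degree v : nat := #|[set w | adjW v w]|.
Definition nbr_sum (th : V -> R) v := \sum_(w | w != v) W v w * th w.

Lemma W_sym u w : W u w = W w u.
Proof. by case: UW => _ []. Qed.

Lemma W_diag v : W v v = 1.
Proof. by case: UW => _ []. Qed.

Lemma W_adj u w : W u w = (adjW u w)%:R.
Proof.
by rewrite /adjW; case: UW => /(_ u w)[]-> _; rewrite ?eqxx // eq_sym oner_eq0.
Qed.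

Lemma W_ge0 u w : 0 <= W u w.
Proof. by rewrite W_adj ler0n. Qed.

Lemma adjW_sym : symmetric adjW.
Proof. by move=> u w; rewrite /adjW W_sym. Qed.

Lemma adjW_refl : reflexive adjW.
Proof. by move=> v; rewrite /adjW W_diag. Qed.

Lemma sum_W v : \sum_w W v w = (degree v)%:R.
Proof.
rewrite /degree -sum1_card natr_sum [RHS]big_mkcond /=.
by apply: eq_bigr => w _; rewrite W_adj inE; case: adjW.
Qed.

Lemma sum_W_mul th v : \sum_w W v w * th w = th v + nbr_sum th v.
Proof. by rewrite (bigD1 v) //= W_diag mul1r. Qed.

Lemma nbr_sum_ge0 th v : (forall w, 0 <= th w) -> 0 <= nbr_sum th v.
Proof. by move=> th_ge0; apply: sumr_ge0 => w _; rewrite mulr_ge0 ?W_ge0. Qed.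

Lemma stableP th :
  stable W th <-> forall v, th v = Num.max 0 (1 - nbr_sum th v).
Proof.
have shift v := @is_least_shift _ (fun x => x + nbr_sum th v) _ _ (fun=> erefl).
split=> [[_ th_least] v | th_fix]; first exact/shift/th_least.
have th_ge0 v : 0 <= th v by rewrite th_fix le_max lexx.
split=> [|v]; last exact/shift.
split=> // v; rewrite sum_W_mul -lerBlDr.
by rewrite [X in _ <= X]th_fix le_max lexx orbT.
Qed.

Lemma stable_ge0 th v : stable W th -> 0 <= th v.
Proof. by case=> -[]. Qed.

Lemma stable_le1 th v : stable W th -> th v <= 1.
Proof.
move=> th_st; move/stableP: (th_st) => ->.
by rewrite ge_max ler01 gerBl nbr_sum_ge0 // => w; exact: stable_ge0.
Qed.

Lemma stable_tight th v : stable W th -> th v != 0 -> \sum_w W v w * th w = 1.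
Proof.
move/stableP/(_ v) => th_v; rewrite sum_W_mul th_v.
by have [_|_] := lerP (1 - nbr_sum th v) 0; rewrite ?eqxx // subrK.
Qed.

Lemma indicator_stable (D : {set V}) :
  independent adjW D -> (forall v, exists2 u, u \in D & adjW v u) ->
  stable W (fun v => (v \in D)%:R).
Proof.
move=> /independentP D_ind D_dom; apply/stableP => v.
have [vD|vD] := boolP (v \in D).
  have -> : nbr_sum (fun w => (w \in D)%:R) v = 0.
    apply: big1 => w wv; have [wD|] := boolP (w \in D); last by rewrite mulr0.
    by rewrite W_adj (negbTE (D_ind v w vD wD _)) ?mul0r // eq_sym.
  by rewrite subr0 max_r ?ler01.
have [u uD avu] := D_dom v.
have uv : u != v by apply: contraNneq vD => <-.
have nbr_ge1 : 1 <= nbr_sum (fun w => (w \in D)%:R) v.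
  rewrite /nbr_sum (bigD1 u) //= uD (eqP avu) mulr1 lerDl.
  by apply: sumr_ge0 => w _; rewrite mulr_ge0 ?W_ge0 ?ler0n.
by rewrite max_l // subr_le0.
Qed.

Lemma exists_stable : exists th, stable W th.
Proof.
have [D /andP[_ D_ind] D_dom] :=
  exists_independent_dominating_heavier degree adjW_sym adjW_refl setT.
exists (fun v => (v \in D)%:R); apply: indicator_stable => // v.
by have [u uD /andP[avu _]] := D_dom v (in_setT v); exists u.
Qed.

Lemma sum_load th : \sum_v \sum_w W v w * th w = \sum_w th w * (degree w)%:R.
Proof.
rewrite exchange_big /=; apply: eq_bigr => w _.
by rewrite -sum_W mulr_sumr; apply: eq_bigr => v _; rewrite W_sym mulrC.
Qed.

Lemma card_le_sum_degree th : stable W th ->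
  #|V|%:R <= \sum_v th v * (degree v)%:R.
Proof.
case=> -[_ th_feas] _; rewrite -sum_load -sum1_card natr_sum.
by apply: ler_sum => v _; exact: th_feas.
Qed.

Lemma stable_concentrate th : stable W th -> exists q : V -> R,
  [/\ forall u, 0 <= q u <= 1,
      forall u w, u != w -> adjW u w -> q u * q w = 0,
      \sum_u q u = l1norm th &
      #|V|%:R <= \sum_u q u * (degree u)%:R].
Proof.
move=> th_st; have th_ge0 v : 0 <= th v by exact: stable_ge0 th_st.
have [D /andP[DP /independentP D_ind] D_dom] :=
  exists_independent_dominating_heavier degree adjW_sym adjW_refl [set v | th v != 0].
pose pi v := odflt v [pick u in D | adjW v u && (degree v <= degree u)%N].
have pi_spec v : th v != 0 ->
    [/\ pi v \in D, adjW v (pi v) & (degree v <= degree (pi v))%N].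
  move=> th_v; rewrite /pi; case: pickP => [u /andP[-> /andP[-> ->]]//|none].
  have [u uD /andP[avu dvu]] : exists2 u, u \in D & adjW v u && (degree v <= degree u)%N.
    by apply: D_dom; rewrite inE.
  by have := none u; rewrite uD avu dvu.
pose q u := \sum_(v | pi v == u) th v.
have q_supp u : q u != 0 -> u \in D.
  apply: contraR => uD; apply/eqP/big1 => v /eqP piv; apply/eqP.
  by apply: contraNT uD => /pi_spec[+ _ _]; rewrite piv.
exists q; split.
- move=> u; rewrite sumr_ge0 //=.
  have [->|/q_supp uD] := eqVneq (q u) 0; first exact: ler01.
  have th_u : th u != 0 by have := subsetP DP u uD; rewrite inE.
  rewrite -(stable_tight th_st th_u) /q big_mkcond /=; apply: ler_sum => v _.
  case: eqP => [piv|_]; last by rewrite mulr_ge0 ?W_ge0.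
  have [->|/pi_spec[_ avu _]] := eqVneq (th v) 0; first by rewrite mulr0.
  by rewrite W_sym W_adj -piv avu mul1r.
- move=> u w uw auw; apply/eqP; rewrite mulf_eq0; apply: contraT.
  rewrite negb_or => /andP[/q_supp uD /q_supp wD].
  by rewrite (negbTE (D_ind u w uD wD uw)) in auw.
- rewrite /l1norm [RHS](partition_big pi xpredT) //=.
  by apply: eq_bigr => u _; apply: eq_bigr => v _; rewrite ger0_norm.
- apply: le_trans (card_le_sum_degree th_st) _.
  rewrite [X in X <= _](partition_big pi xpredT) //=; apply: ler_sum => u _.
  rewrite /q mulr_suml; apply: ler_sum => v /eqP <-.
  have [->|/pi_spec[_ _ dv]] := eqVneq (th v) 0; first by rewrite !mul0r.
  by rewrite ler_wpM2l // ler_nat.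
Qed.

End UnitWeight.

Section UniformPrior.
Variables (R : realType) (V : finType).
Local Notation n := #|V|.

Lemma sum_prior : \sum_(t : profile V) prior R t = 1.
Proof.
set N := #|[set t : profile V | injectiveb t]|.
have N_gt0 : (0 < N)%N.
  apply/card_gt0P; exists [ffun k => enum_val k]; rewrite inE.
  by apply/injectiveP => x y; rewrite !ffunE => /enum_val_inj.
rewrite /prior -big_mkcond /= sumr_const.
have -> : #|[pred t : profile V | injectiveb t]| = N by apply: eq_card => t; rewrite inE.
by rewrite -/N -[LHS]mulr_natr mulVf // pnatr_eq0 -lt0n.
Qed.

Lemma sum_profile (h : V -> R) (t : profile V) : injectiveb t ->
  \sum_(j < n) h (t j) = \sum_v h v.
Proof.
move/injectiveP => t_inj; rewrite [RHS](reindex t) //.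
by apply/onW_bij/inj_card_bij; rewrite // card_ord.
Qed.

Definition swap_agents (i j : 'I_n) (t : profile V) : profile V :=
  [ffun k => t (tperm i j k)].

Lemma swap_agentsK i j : involutive (swap_agents i j).
Proof. by move=> t; apply/ffunP => k; rewrite !ffunE tpermK. Qed.

Lemma swap_agents_inj i j (t : profile V) :
  injectiveb t -> injectiveb (swap_agents i j t).
Proof.
move/injectiveP => t_inj; apply/injectiveP => x y; rewrite !ffunE => /t_inj.
exact: perm_inj.
Qed.

Lemma prior_swap_agents i j (t : profile V) : prior R (swap_agents i j t) = prior R t.
Proof.
rewrite /prior; have [t_inj|t_ninj] := boolP (injectiveb t).
  by rewrite swap_agents_inj.
by rewrite ifN //; apply: contra t_ninj => /(swap_agents_inj i j); rewrite swap_agentsK.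
Qed.

Lemma sum_prior_agent (h : V -> R) (i : 'I_n) :
  \sum_(t : profile V) prior R t * h (t i) = (\sum_v h v) / n%:R.
Proof.
have n_neq0 : n%:R != 0 :> R by rewrite pnatr_eq0 -lt0n (leq_ltn_trans _ (ltn_ord i)).
have agent_invariant j :
    \sum_(t : profile V) prior R t * h (t j) = \sum_(t : profile V) prior R t * h (t i).
  rewrite [RHS](reindex_inj (can_inj (swap_agentsK i j))) /=.
  by apply: eq_bigr => t _; rewrite prior_swap_agents ffunE tpermL.
have : \sum_(j < n) \sum_(t : profile V) prior R t * h (t j) = \sum_v h v.
  rewrite exchange_big /= -[RHS]mul1r -sum_prior mulr_suml; apply: eq_bigr => t _.
  rewrite -mulr_sumr /prior; case: ifP => t_inj; last by rewrite !mul0r.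
  by rewrite sum_profile.
under eq_bigr do rewrite agent_invariant.
rewrite sumr_const card_ord => <-.
by rewrite -[X in X / _]mulr_natr mulfK.
Qed.

End UniformPrior.

Section Persuasion.
Variables (R : realType) (V S : finType) (W : V -> V -> R) (sigma : S -> R).
Variable phi : profile V -> {ffun {ffun V -> S} -> R}.

Lemma Qexp_shift i x a : PrSig phi i a != 0 ->
  Qexp W sigma phi i x a = x + Qexp W sigma phi i 0 a.
Proof.
move=> Pr_neq0; rewrite /Qexp -[x in x + _](mulfK Pr_neq0) -mulrDl; congr (_ / _).
rewrite /PrSig mulr_sumr -big_split; apply: eq_bigr => t _.
rewrite mulr_sumr -big_split; apply: eq_bigr => s _.
by rewrite add0r mulrDr [_ * x]mulrC.
Qed.

Lemma persuasive_max :
  (forall i a, 0 < PrSig phi i a -> sigma a = Num.max 0 (1 - Qexp W sigma phi i 0 a)) ->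
  persuasive W sigma phi.
Proof.
move=> sigma_max i a Pr_gt0; have shift x := Qexp_shift x (lt0r_neq0 Pr_gt0).
split; last exact/(@is_least_shift _ (Qexp W sigma phi i ^~ a) _ _ shift)/sigma_max.
by rewrite shift -lerBlDr [X in _ <= X](sigma_max i a) // le_max lexx orbT.
Qed.

End Persuasion.

Lemma sum_ffun_prod (R : comPzSemiRingType) (V : finType) (F : V -> bool -> R) :
  \sum_(s : {ffun V -> bool}) \prod_v F v (s v) = \prod_v (F v true + F v false).
Proof. by rewrite -bigA_distr_bigA; apply: eq_bigr => v _; rewrite big_bool. Qed.

Section ProductBernoulli.
Variables (R : numDomainType) (V : finType) (q : V -> R).

Definition bernoulli (s : {ffun V -> bool}) : R :=
  \prod_v (if s v then q v else 1 - q v).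

Lemma bernoulli_ge0 s : (forall u, 0 <= q u <= 1) -> 0 <= bernoulli s.
Proof.
move=> q01; apply: prodr_ge0 => v _; have /andP[q_ge0 q_le1] := q01 v.
by case: (s v); rewrite ?subr_ge0.
Qed.

Lemma sum_bernoulli : \sum_s bernoulli s = 1.
Proof.
rewrite (sum_ffun_prod (fun v b => if b then q v else 1 - q v)).
by apply: big1 => v _; rewrite subrKC.
Qed.

Lemma sum_bernoulli_bit u : \sum_s bernoulli s * (s u)%:R = q u.
Proof.
pose F v (b : bool) := (if b then q v else 1 - q v) * (if v == u then b%:R else 1).
have -> : \sum_s bernoulli s * (s u)%:R = \sum_(s : {ffun V -> bool}) \prod_v F v (s v).
  apply: eq_bigr => s _; rewrite /F big_split; congr (_ * _).
  by rewrite (bigD1 u) //= eqxx big1 ?mulr1 // => v /negbTE ->.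
rewrite sum_ffun_prod (bigD1 u) //= /F eqxx mulr1 mulr0 addr0 big1 ?mulr1 //.
by move=> v /negbTE ->; rewrite !mulr1 subrKC.
Qed.

Lemma bernoulli_support s u : bernoulli s != 0 -> s u -> q u != 0.
Proof.
rewrite /bernoulli (bigD1 u) //= => + su; rewrite su.
by apply: contraNneq => ->; rewrite mul0r.
Qed.

End ProductBernoulli.

Section BernoulliScheme.
Variables (R : realType) (V : finType) (W : V -> V -> R) (q : V -> R).
Hypothesis UW : unit_weight W.
Hypothesis q01 : forall u, 0 <= q u <= 1.
Hypothesis q_indep : forall u w, u != w -> adjW W u w -> q u * q w = 0.
Hypothesis q_degree : #|V|%:R <= \sum_u q u * (degree W u)%:R.
Local Notation n := #|V|.

Definition bit (b : bool) : R := b%:R.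

Definition bernoulli_scheme : profile V -> {ffun {ffun V -> bool} -> R} :=
  fun=> [ffun s => bernoulli q s].
Local Notation phi := bernoulli_scheme.

Local Notation bits s := (fun w => bit (s w)).

Lemma is_scheme_bernoulli : is_scheme bit phi.
Proof.
split; first by move=> [] [] //= /eqP; rewrite ?oner_eq0 // eq_sym oner_eq0.
split; first by case; rewrite /bit /= ?ler01 ?lexx.
move=> t _; split=> [s|]; first by rewrite ffunE bernoulli_ge0.
by under eq_bigr do rewrite ffunE; exact: sum_bernoulli.
Qed.

Lemma cost_bernoulli_scheme : cost bit phi = \sum_u q u.
Proof.
rewrite /cost /joint /bernoulli_scheme.
under eq_bigr do under eq_bigr do rewrite ffunE -mulrA.
under eq_bigr do rewrite -mulr_sumr.
rewrite -mulr_suml sum_prior mul1r /l1norm.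
under eq_bigr do rewrite mulr_sumr.
rewrite exchange_big; apply: eq_bigr => v _; rewrite -sum_bernoulli_bit.
by apply: eq_bigr => s _; rewrite ger0_norm ?ler0n.
Qed.

Lemma sum_joint_agent (F : V -> {ffun V -> bool} -> R) (i : 'I_n) :
  \sum_(t : profile V) \sum_s joint phi t s * F (t i) s =
  (\sum_s bernoulli q s * \sum_v F v s) / n%:R.
Proof.
rewrite /joint /bernoulli_scheme.
under eq_bigr do under eq_bigr do rewrite ffunE -mulrA.
under eq_bigr do rewrite -mulr_sumr.
rewrite (sum_prior_agent (fun v => \sum_s bernoulli q s * F v s)); congr (_ / _).
by rewrite exchange_big; apply: eq_bigr => s _; rewrite mulr_sumr.
Qed.

Definition signal_mass a := \sum_s bernoulli q s * \sum_v (s v == a)%:R.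
Definition signal_pull a :=
  \sum_s bernoulli q s * \sum_v (s v == a)%:R * nbr_sum W (bits s) v.

Lemma PrSig_bernoulli i a : PrSig phi i a = signal_mass a / n%:R.
Proof. exact: sum_joint_agent. Qed.

Lemma Qexp_bernoulli i a : Qexp W bit phi i 0 a = signal_pull a / signal_mass a.
Proof.
have n_neq0 : n%:R != 0 :> R by rewrite pnatr_eq0 -lt0n (leq_ltn_trans _ (ltn_ord i)).
rewrite /Qexp PrSig_bernoulli invf_div.
set num := \sum_t _; suff -> : num = signal_pull a / n%:R by rewrite mulrA divfK.
rewrite -(sum_joint_agent (fun v s => (s v == a)%:R * nbr_sum W (bits s) v) i).
by apply: eq_bigr => t _; apply: eq_bigr => s _; rewrite add0r mulrA.
Qed.

Lemma nbr_sum_bernoulli s :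
  bernoulli q s != 0 -> forall v, s v -> nbr_sum W (bits s) v = 0.
Proof.
move=> s_supp v sv; apply: big1 => w wv; rewrite (W_adj UW).
have [avw|] := boolP (adjW W v w); last by rewrite mul0r.
case sw: (s w); last by rewrite mulr0.
have vw : v != w by rewrite eq_sym.
move: (q_indep vw avw) => /eqP; rewrite mulf_eq0.
by rewrite (negbTE (bernoulli_support s_supp sv)) (negbTE (bernoulli_support s_supp sw)).
Qed.

Lemma pull_true : signal_pull true = 0.
Proof.
apply: big1 => s _; have [->|s_supp] := eqVneq (bernoulli q s) 0; first by rewrite mul0r.
rewrite big1 ?mulr0 // => v _; case sv: (s v); last by rewrite mul0r.
by rewrite nbr_sum_bernoulli ?sv ?mulr0.
Qed.

Lemma independent_slack (s : {ffun V -> bool}) :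
  (forall v, s v -> nbr_sum W (bits s) v = 0) ->
  \sum_v (s v == false)%:R * (nbr_sum W (bits s) v - 1) =
  \sum_w bit (s w) * (degree W w)%:R - n%:R.
Proof.
move=> s_indep.
have slack_v v : (s v == false)%:R * (nbr_sum W (bits s) v - 1) =
    \sum_w W v w * bit (s w) - 1.
  rewrite (sum_W_mul UW); case sv: (s v); last by rewrite /bit mul1r add0r.
  by rewrite s_indep // mul0r /bit addr0 subrr.
under eq_bigr do rewrite slack_v.
by rewrite sumrB (sum_load UW) sumr_const.
Qed.

Lemma mass_le_pull_false : signal_mass false <= signal_pull false.
Proof.
rewrite -subr_ge0 /signal_pull /signal_mass -sumrB.
have slack s : bernoulli q s * \sum_v (s v == false)%:R * nbr_sum W (bits s) v -
    bernoulli q s * \sum_v (s v == false)%:R =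
    bernoulli q s * (\sum_w bit (s w) * (degree W w)%:R - n%:R).
  have [->|s_supp] := eqVneq (bernoulli q s) 0; first by rewrite !mul0r subrr.
  rewrite -mulrBr -sumrB -(independent_slack (nbr_sum_bernoulli s_supp)).
  by congr (_ * _); apply: eq_bigr => v _; rewrite mulrBr mulr1.
under eq_bigr do rewrite slack mulrBr mulr_sumr.
rewrite sumrB exchange_big -mulr_suml sum_bernoulli mul1r subr_ge0.
under eq_bigr do under eq_bigr do rewrite mulrA.
by under eq_bigr do rewrite -mulr_suml sum_bernoulli_bit.
Qed.

Lemma persuasive_bernoulli_scheme : persuasive W bit phi.
Proof.
apply: persuasive_max => i a; rewrite Qexp_bernoulli PrSig_bernoulli.
have n_gt0 : 0 < n%:R :> R by rewrite ltr0n (leq_ltn_trans _ (ltn_ord i)).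
case: a => [_|]; first by rewrite pull_true mul0r subr0 max_r ?ler01.
rewrite pmulr_lgt0 ?invr_gt0 // => mass_gt0.
by rewrite max_l // subr_le0 ler_pdivlMr // mul1r mass_le_pull_false.
Qed.

End BernoulliScheme.

From mathcomp Require Import classical_sets topology normedtype derive.
Import numFieldNormedType.Exports.

Section StableMinimizer.
Variables (R : realType) (V : finType) (W : V -> V -> R).
Hypothesis UW : unit_weight W.
Local Open Scope classical_set_scope.
Local Notation X := {ptws V -> R}.

Lemma continuous_sum_coord (g : V -> R -> R) (P : pred V) :
  (forall w, continuous (g w)) ->
  continuous (fun th : X => \sum_(w | P w) g w (th w)).
Proof.
move=> g_cont; apply: continuous_big => [|w _ th]; first exact: add_continuous.
apply: (@continuous_comp _ _ _ (fun th : X => th w)); last exact: g_cont.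
exact: (@proj_continuous _ (fun=> R) w th).
Qed.

Lemma continuous_nbr_sum v : continuous (fun th : X => nbr_sum W th v).
Proof.
exact: (@continuous_sum_coord ( *%R \o W v) (predC1 v)
          (fun w => @mulrl_continuous R (W v w))).
Qed.

Lemma closed_stable : closed [set th : X | stable W th].
Proof.
pose gap v (th : X) : R := th v - Num.max 0 (1 - nbr_sum W th v).
have -> : [set th : X | stable W th] = \bigcap_(v in setT) (gap v @^-1` [set 0]).
  apply/seteqP; split => th /=.
    by move=> /(stableP UW) th_fix v _; rewrite /gap /= -th_fix subrr.
  move=> th_gap; apply/(stableP UW) => v.
  by apply/eqP; rewrite -subr_eq0; exact/eqP/(th_gap v).
apply: closed_bigI => v _; apply: preimage_closed => [th _|]; last exact: closed_eq.
apply: (@continuousB R R^o X (fun th : X => th v)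
          (fun th => Num.max 0 (1 - nbr_sum W th v))).
  exact: (@proj_continuous _ (fun=> R) v th).
apply: (@continuous_max _ _ (fun=> 0) (fun th : X => 1 - nbr_sum W th v)).
  exact: cst_continuous.
apply: (@continuousB R R^o X (fun=> 1) (fun th : X => nbr_sum W th v)).
  exact: cst_continuous.
exact: continuous_nbr_sum.
Qed.

Lemma compact_stable : compact [set th : X | stable W th].
Proof.
have cube : compact [set th : X | forall v, `[0, 1] (th v)].
  by apply: (@tychonoff V (fun=> R) (fun=> `[0, 1])) => v; exact: segment_compact.
apply: subclosed_compact closed_stable cube _ => th th_st v.
by rewrite /= in_itv /= (stable_ge0 _ th_st) (stable_le1 UW _ th_st).
Qed.

Lemma exists_min_stable : exists2 th, stable W th &
  forall th', stable W th' -> l1norm th <= l1norm th'.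
Proof.
have [th0 th0_st] := exists_stable UW.
have l1_cont :
    {within [set th : X | stable W th], continuous (fun th : X => l1norm th)}.
  apply: continuous_subspaceT.
  exact: (@continuous_sum_coord (fun=> Num.norm) xpredT (fun=> @norm_continuous R R)).
have stable_neq0 : [set th : X | stable W th] !=set0 by exists th0.
have [th th_st th_min] := compact_EVT_min stable_neq0 compact_stable l1_cont.
exists th; first by rewrite inE in th_st.
by move=> th' th'_st; apply: th_min; rewrite inE.
Qed.

End StableMinimizer.

Theorem theorem5p5 (R : realType) (V : finType) (W : V -> V -> R) :
  unit_weight W ->
  exists c : R, is_OPT_stable W c /\
    exists (S : finType) (sigma : S -> R) (phi : profile V -> {ffun {ffun V -> S} -> R}),
      [/\ is_scheme sigma phi, #|S| = 2%N, persuasive W sigma phi & cost sigma phi = c].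
Proof.
move=> UW; have [th th_st th_min] := exists_min_stable UW.
have [q [q01 q_indep q_sum q_degree]] := stable_concentrate UW th_st.
exists (l1norm th); split.
  by split=> [|_ [th' [th'_st <-]]]; [exists th | exact: th_min].
exists bool, (@bit R), (bernoulli_scheme q); split.
- exact: is_scheme_bernoulli.
- exact: card_bool.
- exact: persuasive_bernoulli_scheme.
- by rewrite cost_bernoulli_scheme.
Qed.
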